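(* Let $b$ be a slowly varying function satisfying $\lim_{t\to0^+}b(t)\in(0,\infty)$, and extend $b$ to all of $\mathbb{R}$ by putting $b(s)=\lim_{t\to0^+}b(t)$ for $s\in(-\infty,0]$. Then for every $t_0\in\mathbb{R}$ there is a constant $C>0$ such that for every $t_1\in[-t_0,t_0]$ the function $b_{t_1}(t)=b(t-t_1)$, $t\in(0,\infty)$, satisfies \[C^{-1}\le\frac{b_{t_1}(t)}{b(t)}\le C\quad\text{for every }t\in(0,\infty).\] In particular, $b_{t_1}$ is a slowly varying function for every choice of $t_1\in\mathbb{R}$.
   Context: A measurable function $b:(0,\infty)\to(0,\infty)$ is called slowly varying if for every $\varepsilon>0$ there exist a non-decreasing function $b_\varepsilon$ and a non-increasing function $b_{-\varepsilon}$ on $(0,\infty)$ such that $t^{\varepsilon}b(t)\approx b_\varepsilon(t)$ and $t^{-\varepsilon}b(t)\approx b_{-\varepsilon}(t)$ on $(0,\infty)$, where $f\approx g$ means $C^{-1}g\le f\le Cg$ for some constant $C\ge1$ independent of the argument. Measurability is with respect to Lebesgue measure. *)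

From HB Require Import structures.
From mathcomp Require Import all_boot all_order all_algebra.
From mathcomp Require Import all_classical all_reals all_analysis.
From mathcomp Require Import measurable_realfun.
Set Implicit Arguments. Unset Strict Implicit. Unset Printing Implicit Defensive.
Import Order.TTheory GRing.Theory Num.Theory.
Import numFieldNormedType.Exports.
Local Open Scope classical_set_scope.
Local Open Scope ring_scope.

Section SV.
Variable R : realType.

(* Lebesgue measurable subsets of R: the completion of the Borel sets
   w.r.t. Lebesgue measure (Borel set union a Lebesgue-null set). *)
Definition lebesgue_measurable (A : set R) : Prop :=
  completed_algebra_gen (@lebesgue_measure R) A.

Definition lebesgue_measurable_fun (D : set R) (f : R -> R) : Prop :=
  forall B : set R, measurable B -> lebesgue_measurable (D `&` f @^-1` B).

Definition approx_pos (f g : R -> R) : Prop :=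
  exists C : R, 1 <= C /\
    forall t : R, 0 < t -> C^-1 * g t <= f t /\ f t <= C * g t.

(* b : (0,oo) -> (0,oo) slowly varying (only values on (0,oo) matter). *)
Definition slowly_varying (b : R -> R) : Prop :=
  lebesgue_measurable_fun `]0, +oo[ b /\
  (forall t : R, 0 < t -> 0 < b t) /\
  forall eps : R, 0 < eps ->
    (exists bp : R -> R,
       (forall s t : R, 0 < s -> s <= t -> bp s <= bp t) /\
       approx_pos (fun t => t `^ eps * b t) bp) /\
    (exists bm : R -> R,
       (forall s t : R, 0 < s -> s <= t -> bm t <= bm s) /\
       approx_pos (fun t => t `^ (- eps) * b t) bm).

End SV.

(* With eps = 1, the definition of slow variation makes t b(t) almost
   increasing and b(t)/t almost decreasing on (0,oo).  Hence b(s) and b(t) are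
   comparable whenever s <= t <= 2s, and b is bounded above and away from 0 on
   every [e, T] with e > 0; as b tends to L at 0+ and equals L on (-oo,0], it
   is bounded above and away from 0 on every (-oo, T].  For |t1| <= t0, either
   t <= 2 t0, and then t and t - t1 both lie in (-oo, 3 t0], or t and t - t1
   are within a factor 2 of each other; in both cases b(t - t1) is comparable
   to b(t) uniformly in t1.  Then t^(+-eps) b(t - t1) is comparable to
   t^(+-eps) b(t), hence to the same monotone functions, and b(. - t1) is
   Lebesgue measurable because translations preserve Lebesgue null sets. *)

From mathcomp Require Import all_boot all_order all_algebra.
From mathcomp Require Import all_classical all_reals all_analysis.
From mathcomp Require Import measurable_realfun.
From mathcomp Require Import ring lra.
Set Implicit Arguments.
Unset Strict Implicit.
Unset Printing Implicit Defensive.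
Import Order.TTheory GRing.Theory Num.Theory.
Import numFieldNormedType.Exports.
Local Open Scope classical_set_scope.
Local Open Scope ring_scope.

Section lebesgue_measurable.
Variable R : realType.
Implicit Types (A D X Y : set R) (c : R) (f : R -> R).

Let measurable_shift c : measurable_fun [set: R] (fun x => x + c).
Proof. by apply: measurable_funD => //; exact: measurable_cst. Qed.

Lemma lebesgue_measure_shift c A : measurable A ->
  lebesgue_measure ((fun x => x + c) @^-1` A) = lebesgue_measure A.
Proof.
(* The pushforward of Lebesgue measure by the translation agrees with it on
   the intervals ]x, y], hence on all Borel sets. *)
move=> mA; unshelve epose proof (@lebesgue_measure_unique R
  (@pushforward _ _ (measurableTypeR R) (measurableTypeR R) R
    lebesgue_measure (fun x => x + c)) _ A mA) as shiftE.
- exact: measurable_shift.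
- move=> X /ocitvP [->|[[x y] /= xy ->]]; first by rewrite !measure0.
  rewrite /pushforward.
  have -> : (fun z => z + c) @^-1` `]x, y] = `]x - c, y - c]%classic.
    by apply/seteqP; split => z /=; rewrite !in_itv /= ltrBlDr lerBrDr.
  rewrite !lebesgue_measure_itv /= !lte_fin ltrD2r.
  by case: ifP => // _; rewrite -!EFinB; congr (_%:E); ring.
- by rewrite shiftE.
Qed.

Lemma measurable_lebesgue_measurable D : measurable D -> lebesgue_measurable D.
Proof.
move=> mD; exists D => //.
by exists set0; [exact: negligible_set0|rewrite setU0].
Qed.

Lemma lebesgue_measurableU X Y : lebesgue_measurable X ->
  lebesgue_measurable Y -> lebesgue_measurable (X `|` Y).
Proof.
move=> [A mA [N nN <-]] [B mB [M nM <-]].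
exists (A `|` B); first exact: measurableU.
by exists (N `|` M); [exact: negligibleU | rewrite setUACA].
Qed.

Lemma lebesgue_measurableI D X : measurable D -> lebesgue_measurable X ->
  lebesgue_measurable (D `&` X).
Proof.
move=> mD [A mA [N nN <-]].
exists (D `&` A); first exact: measurableI.
by exists (D `&` N); [exact: negligibleS nN | rewrite setIUr].
Qed.

Lemma lebesgue_measurable_shift c X : lebesgue_measurable X ->
  lebesgue_measurable ((fun x => x + c) @^-1` X).
Proof.
have mshift A : measurable A -> measurable ((fun x => x + c) @^-1` A).
  by move=> mA; rewrite -[_ @^-1` _]setTI; exact: measurable_shift.
move=> [A mA [N [M [mM M0 NM]] <-]].
exists ((fun x => x + c) @^-1` A); first exact: mshift.
exists ((fun x => x + c) @^-1` N); last by rewrite preimage_setU.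
exists ((fun x => x + c) @^-1` M); split; first exact: mshift.
- by rewrite lebesgue_measure_shift.
- by move=> x /NM.
Qed.

Lemma lebesgue_measurable_funU D1 D2 f : lebesgue_measurable_fun D1 f ->
  lebesgue_measurable_fun D2 f -> lebesgue_measurable_fun (D1 `|` D2) f.
Proof.
move=> f1 f2 B mB; rewrite setIUl.
exact: lebesgue_measurableU (f1 B mB) (f2 B mB).
Qed.

Lemma lebesgue_measurable_fun_cst D f (y : R) : measurable D ->
  (forall x, D x -> f x = y) -> lebesgue_measurable_fun D f.
Proof.
move=> mD fD B mB; apply: measurable_lebesgue_measurable.
have [By|By] := pselect (B y).
  by rewrite (_ : _ `&` _ = D) // setIidl // => x /fD /= ->.
by rewrite (_ : _ `&` _ = set0) // -subset0 => x [/fD /= ->].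
Qed.

Lemma lebesgue_measurable_fun_shift D f c : measurable D ->
  lebesgue_measurable_fun [set: R] f ->
  lebesgue_measurable_fun D (fun x => f (x + c)).
Proof.
move=> mD mf B mB; apply: lebesgue_measurableI => //.
by have := lebesgue_measurable_shift c (mf B mB); rewrite setTI.
Qed.

End lebesgue_measurable.

Section approx_pos.
Variable R : realType.
Implicit Types f g h w : R -> R.

Lemma approx_posP f g : approx_pos f g <-> exists C, 1 <= C /\
  forall t, 0 < t -> f t <= C * g t /\ g t <= C * f t.
Proof.
split=> -[C [C1 HC]]; exists C; have C0 := lt_le_trans ltr01 C1.
  by split=> // t /HC [lo hi]; split=> //; rewrite -ler_pdivrMl.
by split=> // t /HC [hi lo]; split=> //; rewrite ler_pdivrMl.
Qed.

Lemma approx_pos_trans f g h :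
  approx_pos f g -> approx_pos g h -> approx_pos f h.
Proof.
move=> /approx_posP [C [C1 fg]] /approx_posP [D [D1 gh]].
apply/approx_posP; exists (C * D); split; first by rewrite mulr_ege1.
move=> t t0; have [fg1 fg2] := fg t t0; have [gh1 gh2] := gh t t0.
have C0 : 0 <= C by lra.
have D0 : 0 <= D by lra.
split; first by rewrite -mulrA; apply: le_trans fg1 _; rewrite ler_wpM2l.
by rewrite [C * D]mulrC -mulrA; apply: le_trans gh2 _; rewrite ler_wpM2l.
Qed.

Lemma approx_posMl w f g : (forall t, 0 < t -> 0 <= w t) ->
  approx_pos f g -> approx_pos (fun t => w t * f t) (fun t => w t * g t).
Proof.
move=> w0 [C [C1 HC]]; exists C; split=> // t t0; have [lo hi] := HC t t0.
by rewrite mulrCA [_ * (w t * _)]mulrCA !ler_wpM2l ?w0.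
Qed.

Lemma approx_pos_nondecreasing f g :
  (forall s t, 0 < s -> s <= t -> g s <= g t) -> approx_pos f g ->
  exists C, 1 <= C /\ forall s t, 0 < s -> s <= t -> f s <= C * f t.
Proof.
move=> g_nd /approx_posP [C [C1 fg]]; exists (C * C); split.
  by rewrite mulr_ege1.
move=> s t s0 st; have t0 := lt_le_trans s0 st.
have [fs _] := fg s s0; have [_ gt] := fg t t0.
rewrite -mulrA; apply: (le_trans fs); rewrite ler_wpM2l ?(le_trans ler01 C1) //.
exact: le_trans (g_nd s t s0 st) gt.
Qed.

Lemma approx_pos_nonincreasing f g :
  (forall s t, 0 < s -> s <= t -> g t <= g s) -> approx_pos f g ->
  exists C, 1 <= C /\ forall s t, 0 < s -> s <= t -> f t <= C * f s.
Proof.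
move=> g_ni /approx_posP [C [C1 fg]]; exists (C * C); split.
  by rewrite mulr_ege1.
move=> s t s0 st; have t0 := lt_le_trans s0 st.
have [_ gs] := fg s s0; have [ft _] := fg t t0.
rewrite -mulrA; apply: (le_trans ft); rewrite ler_wpM2l ?(le_trans ler01 C1) //.
exact: le_trans (g_ni s t s0 st) gs.
Qed.

End approx_pos.

Section slowly_varying.
Variables (R : realType) (b : R -> R).
Hypothesis b_sv : slowly_varying b.

Lemma slowly_varying_gt0 t : 0 < t -> 0 < b t.
Proof. by move=> t0; case: b_sv => _ [/(_ t t0)]. Qed.

Lemma slowly_varying_almost_increasing : exists C, 1 <= C /\
  forall s t, 0 < s -> s <= t -> s * b s <= C * (t * b t).
Proof.
case: b_sv => _ [_ /(_ 1 ltr01) [[bp [bp_nd bp_approx]] _]].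
have [C [C1 HC]] := approx_pos_nondecreasing bp_nd bp_approx.
exists C; split=> // s t s0 st.
by have := HC s t s0 st; rewrite !powRr1 // ltW // (lt_le_trans s0 st).
Qed.

Lemma slowly_varying_almost_decreasing : exists C, 1 <= C /\
  forall s t, 0 < s -> s <= t -> s * b t <= C * (t * b s).
Proof.
case: b_sv => _ [_ /(_ 1 ltr01) [_ [bm [bm_ni bm_approx]]]].
have [C [C1 HC]] := approx_pos_nonincreasing bm_ni bm_approx.
exists C; split=> // s t s0 st; have t0 := lt_le_trans s0 st.
have := HC s t s0 st; rewrite !powR_inv1 ?(ltW s0) ?(ltW t0) // => dec.
have -> : s * b t = t^-1 * b t * (s * t) by field; rewrite gt_eqF.
have -> : C * (t * b s) = C * (s^-1 * b s) * (s * t) by field; rewrite gt_eqF.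
by rewrite ler_wpM2r // ltW // mulr_gt0.
Qed.

Lemma slowly_varying_doubling : exists K, 1 <= K /\ forall s t,
  0 < s -> s <= t -> t <= 2 * s -> b s <= K * b t /\ b t <= K * b s.
Proof.
have [C1 [C1_ge1 up]] := slowly_varying_almost_increasing.
have [C2 [C2_ge1 down]] := slowly_varying_almost_decreasing.
have cancel_s (C s t x y : R) : 0 < s -> t <= 2 * s -> 0 <= C -> 0 <= y ->
    s * x <= C * (t * y) -> x <= 2 * C * y.
  move=> s0 ts C0 y0 sx; rewrite -(ler_pM2l s0); apply: le_trans sx _.
  have -> : s * (2 * C * y) = C * (2 * s * y) by ring.
  by rewrite ler_wpM2l // ler_wpM2r.
exists (2 * (C1 + C2)); split; first lra.
move=> s t s0 st ts; have t0 := lt_le_trans s0 st.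
have [bs0 bt0] := (ltW (slowly_varying_gt0 s0), ltW (slowly_varying_gt0 t0)).
have [C1_ge0 C2_ge0] : 0 <= C1 /\ 0 <= C2 by split; lra.
split.
- apply: le_trans (cancel_s C1 s t _ _ s0 ts C1_ge0 bt0 (up s t s0 st)) _.
  by rewrite ler_wpM2r //; lra.
- apply: le_trans (cancel_s C2 s t _ _ s0 ts C2_ge0 bs0 (down s t s0 st)) _.
  by rewrite ler_wpM2r //; lra.
Qed.

Lemma slowly_varying_bounded_itv e T : 0 < e -> e <= T ->
  exists m M, 0 < m /\ forall s, e <= s -> s <= T -> m <= b s /\ b s <= M.
Proof.
move=> e0 eT; have T0 := lt_le_trans e0 eT; have be0 := slowly_varying_gt0 e0.
have [C1 [C1_ge1 up]] := slowly_varying_almost_increasing.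
have [C2 [C2_ge1 down]] := slowly_varying_almost_decreasing.
have [C1_gt0 C2_ge0] : 0 < C1 /\ 0 <= C2 by split; lra.
exists (e * b e / (C1 * T)), (C2 * T * b e / e); split.
  by rewrite divr_gt0 ?mulr_gt0.
move=> s es sT; have s0 := lt_le_trans e0 es.
have bs0 := ltW (slowly_varying_gt0 s0).
split.
- rewrite ler_pdivrMr ?mulr_gt0 //; apply: le_trans (up e s e0 es) _.
  by rewrite [b s * _]mulrC -mulrA ler_wpM2l ?ler_wpM2r // ltW.
- rewrite ler_pdivlMr // mulrC; apply: le_trans (down e s e0 es) _.
  by rewrite -mulrA ler_wpM2l ?ler_wpM2r // ltW.
Qed.

End slowly_varying.

Section extension.
Variables (R : realType) (b : R -> R) (L : R).
Hypotheses (b_sv : slowly_varying b) (L_gt0 : 0 < L)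
  (b_cvg : b t @[t --> 0^'+] --> L) (b_le0 : forall s, s <= 0 -> b s = L).

Lemma extension_gt0 s : 0 < b s.
Proof.
by have [/slowly_varying_gt0 -> //|s_le0] := ltrP 0 s; rewrite b_le0.
Qed.

Lemma extension_near0 : exists2 d, 0 < d &
  forall s, s <= d -> L / 2 <= b s /\ b s <= 3 * L / 2.
Proof.
have L2_gt0 : 0 < L / 2 by rewrite divr_gt0.
have [d /= d0 Hd] := (cvgrPdist_lt _ _).1 b_cvg _ L2_gt0.
exists (d / 2) => [|s sd]; first by rewrite divr_gt0.
have [s_le0|s0] := lerP s 0; first by rewrite b_le0 //; move: L_gt0; lra.
have : `|L - b s| < L / 2.
  by apply: Hd => //; rewrite /= sub0r normrN gtr0_norm //; lra.
by rewrite ltr_norml => /andP [lo hi]; split; lra.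
Qed.

Lemma extension_bounded T : exists m M, 0 < m /\
  forall s, s <= T -> m <= b s /\ b s <= M.
Proof.
have [d d0 near0] := extension_near0.
have [d_le T_le] : d <= Num.max d T /\ T <= Num.max d T.
  by rewrite !le_max !lexx orbT.
have [m [M [m0 bnd]]] := slowly_varying_bounded_itv b_sv d0 d_le.
exists (Num.min (L / 2) m), (Num.max (3 * L / 2) M).
split=> [|s sT]; first by rewrite lt_min m0 divr_gt0.
rewrite ge_min le_max; have [sd|ds] := lerP s d.
  by have [-> ->] := near0 s sd.
by have [-> ->] := bnd s (ltW ds) (le_trans sT T_le); rewrite !orbT.
Qed.

Lemma extension_shift_cmp t0 : exists C, 1 <= C /\
  forall t1, - t0 <= t1 <= t0 -> forall t, 0 < t ->
    b (t - t1) <= C * b t /\ b t <= C * b (t - t1).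
Proof.
have [K [K1 dbl]] := slowly_varying_doubling b_sv.
have [m [M [m0 bnd]]] := extension_bounded (3 * t0).
have bnd_ratio u v : u <= 3 * t0 -> v <= 3 * t0 -> b u <= M / m * b v.
  move=> u_le v_le; have [mu bu] := bnd u u_le; have [bv _] := bnd v v_le.
  have Mm_ge0 : 0 <= M / m.
    by rewrite divr_ge0 ?ltW // (lt_le_trans m0 (le_trans mu bu)).
  by apply: (le_trans bu); rewrite -{1}(mulfVK (lt0r_neq0 m0) M) ler_wpM2l.
exists (Num.max K (M / m)); split=> [|t1 /andP [t1_ge t1_le] t t_gt0].
  by rewrite le_max K1.
suff [C [C_le [up down]]] : exists C, C <= Num.max K (M / m) /\
    b (t - t1) <= C * b t /\ b t <= C * b (t - t1).
  have [bt0 bt10] := (extension_gt0 t, extension_gt0 (t - t1)).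
  by split; [apply: (le_trans up)|apply: (le_trans down)];
    rewrite ler_wpM2r // ltW.
have [t_small|t_large] := lerP t (2 * t0).
  exists (M / m); rewrite le_max lexx orbT; split=> //.
  by split; apply: bnd_ratio; lra.
exists K; split; first by rewrite le_max lexx.
have [t1_ge0|t1_lt0] := lerP 0 t1; first by apply: dbl; lra.
have [t_le t1_le2] : t <= t - t1 /\ t - t1 <= 2 * t by split; lra.
by have [] := dbl t (t - t1) t_gt0 t_le t1_le2.
Qed.

Lemma extension_shift_approx t1 : approx_pos (fun t => b (t - t1)) b.
Proof.
have [C [C1 cmp]] := extension_shift_cmp `|t1|.
by apply/approx_posP; exists C; split=> //; apply: cmp; rewrite -ler_norml.
Qed.

Lemma slowly_varying_shift t1 : slowly_varying (fun t => b (t - t1)).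
Proof.
case: b_sv => b_meas [_ b_approx]; split; [|split].
- apply: lebesgue_measurable_fun_shift; first exact: measurable_itv.
  rewrite -(itv_setU_setT false 0); apply: lebesgue_measurable_funU => //.
  apply: (lebesgue_measurable_fun_cst (y := L)) => [|x].
    exact: measurable_itv.
  by rewrite /= in_itv /=; exact: b_le0.
- by move=> t _; exact: extension_gt0.
- move=> eps /b_approx [[bp [bp_nd bp_approx]] [bm [bm_ni bm_approx]]].
  have shift_approx r :
      approx_pos (fun t => t `^ r * b (t - t1)) (fun t => t `^ r * b t).
    by apply: approx_posMl (extension_shift_approx t1) => t _; exact: powR_ge0.
  split; [exists bp | exists bm]; split=> //.
    exact: approx_pos_trans (shift_approx _) bp_approx.
  exact: approx_pos_trans (shift_approx _) bm_approx.
Qed.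

End extension.

Theorem lemma3p2 (R : realType) (b : R -> R) (L : R) :
  slowly_varying b ->
  0 < L ->
  b t @[t --> 0^'+] --> L ->
  (forall s : R, s <= 0 -> b s = L) ->
  (forall t0 : R, exists C : R, 0 < C /\
     forall t1 : R, - t0 <= t1 <= t0 ->
       forall t : R, 0 < t ->
         C^-1 <= b (t - t1) / b t /\ b (t - t1) / b t <= C) /\
  (forall t1 : R, slowly_varying (fun t => b (t - t1))).
Proof.
move=> b_sv L_gt0 b_cvg b_le0.
split; last exact: slowly_varying_shift b_sv L_gt0 b_cvg b_le0.
move=> t0; have [C [C1 cmp]] := extension_shift_cmp b_sv L_gt0 b_cvg b_le0 t0.
have C0 : 0 < C by lra.
exists C; split=> // t1 t1_in t t_gt0; have [up down] := cmp t1 t1_in t t_gt0.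
have bt0 := extension_gt0 b_sv L_gt0 b_le0 t.
by rewrite ler_pdivlMr // ler_pdivrMl // ler_pdivrMr.
Qed.
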